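(* Let $A_0(z)$ be the unique function holomorphic near $z=0$ with $A_0(0)=0$ and $z(1+A_0(z))^3=A_0(z)$, and define $A_{k}(z)$, $k\ge1$, recursively by the recurrence below. Define numbers $A_k[n]$ by $A_k(z)=(-1)^k\sum_{n=1}^\infty A_k[n]z^n$. Then for all $k\ge0$ and $n\ge1$, $A_k[n]$ is a positive integer, and $A_k[1]=1$.
   Context: With $\delta_z=z\frac{d}{dz}$, for $k\ge0$: $$A_{k+1}=\frac{1+A_0}{2A_0-1}\Bigl(\delta_z^2A_k+\sum_{i+j=k}\bigl(A_i\delta_z^2A_j-\delta_zA_i\,\delta_zA_j\bigr)-3z\!\!\sum_{\substack{i+j=k+1\\ i,j\le k}}\!\!A_iA_j-z\!\!\!\sum_{\substack{j_1+j_2+j_3=k+1\\ j_1,j_2,j_3\le k}}\!\!\!A_{j_1}A_{j_2}A_{j_3}\Bigr),$$ all indices nonnegative. Equivalently, $(A_k)_{k\ge0}$ is the unique sequence of functions holomorphic in $|z|<4/27$ such that $\sum_k A_k(z)a^{-2k}$ formally solves $a^2(z(1+A)^3-A)=(1+A)\delta_z^2A-(\delta_zA)^2$. *)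

From HB Require Import structures.
From mathcomp Require Import all_boot all_order all_algebra all_field.
Set Implicit Arguments. Unset Strict Implicit. Unset Printing Implicit Defensive.
Import Order.TTheory GRing.Theory Num.Theory.
Local Open Scope ring_scope.

(* a power series sum_n f n z^n *)
Definition series := nat -> algC.

Definition sconst (c : algC) : series := fun n => if n is 0 then c else 0.
Definition sadd (f g : series) : series := fun n => f n + g n.
Definition smul (f g : series) : series :=
  fun n => \sum_(i < n.+1) f i * g (n - i)%N.
Definition sz (f : series) : series := fun n => if n is m.+1 then f m else 0.
(* delta_z = z d/dz *)
Definition sdelta (f : series) : series := fun n => n%:R * f n.

(* The bracket in the recurrence for A_{k+1}, as a series. *)
Definition rec_rhs (A : nat -> series) (k : nat) : series := fun n =>
  sdelta (sdelta (A k)) n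
  + \sum_(i < k.+1) (smul (A i) (sdelta (sdelta (A (k - i)%N))) n
                     - smul (sdelta (A i)) (sdelta (A (k - i)%N)) n)
  - 3 * \sum_(i < k.+1) \sum_(j < k.+1 | (i + j == k.+1)%N)
           sz (smul (A i) (A j)) n
  - \sum_(j1 < k.+1) \sum_(j2 < k.+1) \sum_(j3 < k.+1 | (j1 + j2 + j3 == k.+1)%N)
           sz (smul (smul (A j1) (A j2)) (A j3)) n.

From HB Require Import structures.
From mathcomp Require Import all_boot all_order all_algebra all_field.
From mathcomp Require Import boolp ring.
Import Order.TTheory GRing.Theory Num.Theory.
Local Open Scope ring_scope.

(* Put B_k := (-1)^k A_k.  Since 1 + A_0 is a unit and z (1 + A_0)^3 = A_0, the
   recurrence is equivalent to
     B_(k+1) = 3 z (1 + A_0)^2 B_(k+1) + d^2 B_k + sum_(i+j=k) (B_i d^2 B_j - dB_i dB_j)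
               + 3 z sum B_i B_j + z sum B_j1 B_j2 B_j3,
   where d = delta_z.  As z (1 + A_0)^2 has no constant term, this determines the
   coefficients of B_(k+1) one after the other, and every term on the right has
   nonnegative integer coefficients: for the bracket, symmetrising (i, p) <-> (j, q)
   turns it into (1/2) sum B_i[p] B_j[q] (q - p)^2.  The term d^2 B_k contributes
   n^2 B_k[n] > 0 to the coefficient of z^n, and exactly 1 to that of z. *)

Definition trunc_poly (n : nat) (f : series) : {poly algC} := \poly_(i < n.+1) f i.

Lemma coef_trunc_poly (n : nat) (f : series) (i : nat) :
  (i <= n)%N -> (trunc_poly n f)`_i = f i.
Proof. by move=> le_in; rewrite coef_poly ltnS le_in. Qed.

Lemma smul_coefM (n : nat) (f g : series) (m : nat) : (m <= n)%N ->
  smul f g m = (trunc_poly n f * trunc_poly n g)`_m.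
Proof.
move=> le_mn; rewrite coefM; apply: eq_bigr => i _.
have le_in : (i <= n)%N by apply: leq_trans le_mn; rewrite -ltnS.
by rewrite !coef_trunc_poly // (leq_trans (leq_subr _ _) le_mn).
Qed.

Lemma smulA : associative smul.
Proof.
move=> f g h; apply: funext => n.
transitivity ((trunc_poly n f * (trunc_poly n g * trunc_poly n h))`_n).
  rewrite {1}/smul coefM; apply: eq_bigr => i _.
  by rewrite coef_trunc_poly ?(smul_coefM n) ?leq_subr // -ltnS.
rewrite mulrA coefM {1}/smul; apply: eq_bigr => i _.
by rewrite [(trunc_poly n h)`__]coef_trunc_poly ?(smul_coefM n) ?leq_subr // -ltnS.
Qed.

Lemma smulC : commutative smul.
Proof. by move=> f g; apply: funext => n; rewrite !(smul_coefM n) // mulrC. Qed.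

Lemma smulDl : left_distributive smul sadd.
Proof.
move=> f g h; apply: funext => n; rewrite /smul /sadd -big_split.
by apply: eq_bigr => i _; rewrite mulrDl.
Qed.

Lemma smul1 : left_id (sconst 1) smul.
Proof.
move=> f; apply: funext => n; rewrite /smul big_ord_recl /= mul1r subn0.
by rewrite big1 ?addr0 // => i _; rewrite mul0r.
Qed.

Definition sscale (c : algC) (f : series) : series := fun n => c * f n.

Lemma smul_sscalel (c : algC) (f g : series) :
  smul (sscale c f) g = sscale c (smul f g).
Proof.
apply: funext => n; rewrite /sscale /smul mulr_sumr.
by apply: eq_bigr => i _; rewrite mulrA.
Qed.

Lemma smul_sscaler (c : algC) (f g : series) :
  smul f (sscale c g) = sscale c (smul f g).
Proof. by rewrite smulC smul_sscalel smulC. Qed.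

Lemma sdelta_sscale (c : algC) (f : series) : sdelta (sscale c f) = sscale c (sdelta f).
Proof. by apply: funext => n; rewrite /sdelta /sscale mulrCA. Qed.

Lemma sz_sscale (c : algC) (f : series) : sz (sscale c f) = sscale c (sz f).
Proof. by apply: funext => -[|n]; rewrite /sscale /= ?mulr0. Qed.

Lemma smul_at0 (f g : series) : smul f g 0%N = f 0%N * g 0%N.
Proof. by rewrite /smul big_ord_recl big_ord0 addr0. Qed.

Lemma smul_at1 (f g : series) : smul f g 1%N = f 0%N * g 1%N + f 1%N * g 0%N.
Proof. by rewrite /smul big_ord_recl big_ord_recl big_ord0 addr0. Qed.

Lemma sdelta_at0 (f : series) : sdelta f 0%N = 0.
Proof. by rewrite /sdelta mul0r. Qed.

Definition nat_series (f : series) : Prop := forall n, f n \is a Num.nat.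

Definition posint_normalized (f : series) : Prop :=
  [/\ f 0%N = 0, nat_series f, forall n, (0 < n)%N -> 0 < f n & f 1%N = 1].

Lemma sconst_nat {c : algC} : c \is a Num.nat -> nat_series (sconst c).
Proof. by move=> cnat n; case: n => [|n] //=; rewrite rpred0. Qed.

Lemma sadd_nat {f g : series} : nat_series f -> nat_series g -> nat_series (sadd f g).
Proof. by move=> fnat gnat n; rewrite rpredD. Qed.

Lemma sscale_nat {c : algC} {f : series} :
  c \is a Num.nat -> nat_series f -> nat_series (sscale c f).
Proof. by move=> cnat fnat n; rewrite rpredM. Qed.

Lemma sz_nat {f : series} : nat_series f -> nat_series (sz f).
Proof. by move=> fnat n; case: n => [|n] //=; rewrite rpred0. Qed.

Lemma sdelta_nat {f : series} : nat_series f -> nat_series (sdelta f).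
Proof. by move=> fnat n; rewrite rpredM ?natr_nat. Qed.

Lemma smul_nat_le (f g : series) (n : nat) :
  (forall p, (p <= n)%N -> f p \is a Num.nat) ->
  (forall p, (p <= n)%N -> g p \is a Num.nat) -> smul f g n \is a Num.nat.
Proof.
move=> fnat gnat; apply: rpred_sum => i _.
by rewrite rpredM ?fnat ?gnat ?leq_subr // -ltnS.
Qed.

Lemma smul_nat {f g : series} : nat_series f -> nat_series g -> nat_series (smul f g).
Proof. by move=> fnat gnat n; apply: smul_nat_le. Qed.

Lemma smul_nat_lt (f g : series) (n : nat) : f 0%N = 0 -> nat_series f ->
  (forall m, (m < n)%N -> g m \is a Num.nat) -> smul f g n \is a Num.nat.
Proof.
move=> f0 fnat gnat; rewrite /smul big_ord_recl f0 mul0r add0r.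
apply: rpred_sum => i _; rewrite rpredM ?fnat ?gnat //.
by case: n gnat i => [|n] gnat [i lt_in] //=; rewrite /bump /= subSS ltnS leq_subr.
Qed.

Lemma smul_ge_coef {f g : series} (n : nat) :
  f 0%N = 1 -> nat_series f -> nat_series g -> g n <= smul f g n.
Proof.
move=> f0 fnat gnat; rewrite /smul big_ord_recl f0 mul1r subn0 lerDl.
by apply: sumr_ge0 => i _; rewrite natr_ge0 ?rpredM ?fnat ?gnat.
Qed.

(* A fresh copy of [series] carrying the Cauchy-product ring structure, so that
   identities between series can be proved by [ring]. *)
Record fps := FPS { fps_coef : series }.

HB.instance Definition _ := gen_eqMixin fps.
HB.instance Definition _ := gen_choiceMixin fps.

Definition fps0 := FPS (sconst 0).
Definition fps1 := FPS (sconst 1).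
Definition fps_add (a b : fps) := FPS (sadd (fps_coef a) (fps_coef b)).
Definition fps_opp (a : fps) := FPS (fun n => - fps_coef a n).
Definition fps_mul (a b : fps) := FPS (smul (fps_coef a) (fps_coef b)).

Lemma fps_addA : associative fps_add.
Proof. by move=> [f] [g] [h]; congr FPS; apply: funext => n; apply: addrA. Qed.
Lemma fps_addC : commutative fps_add.
Proof. by move=> [f] [g]; congr FPS; apply: funext => n; apply: addrC. Qed.
Lemma fps_add0 : left_id fps0 fps_add.
Proof. by move=> [f]; congr FPS; apply: funext => -[|n]; apply: add0r. Qed.
Lemma fps_addN : left_inverse fps0 fps_opp fps_add.
Proof. by move=> [f]; congr FPS; apply: funext => -[|n]; apply: addNr. Qed.

HB.instance Definition _ := GRing.isZmodule.Build fps fps_addA fps_addC fps_add0 fps_addN.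

Lemma fps_mulA : associative fps_mul.
Proof. by move=> [f] [g] [h]; rewrite /fps_mul /= smulA. Qed.
Lemma fps_mulC : commutative fps_mul.
Proof. by move=> [f] [g]; rewrite /fps_mul /= smulC. Qed.
Lemma fps_mul1 : left_id fps1 fps_mul.
Proof. by move=> [f]; rewrite /fps_mul /= smul1. Qed.
Lemma fps_mulDl : left_distributive fps_mul fps_add.
Proof. by move=> [f] [g] [h]; rewrite /fps_mul /fps_add /= smulDl. Qed.
Lemma fps1_neq0 : fps1 != 0.
Proof. by apply/eqP => -[/(congr1 (fun f => f 0%N))] /eqP; rewrite oner_eq0. Qed.

HB.instance Definition _ :=
  GRing.Zmodule_isComNzRing.Build fps fps_mulA fps_mulC fps_mul1 fps_mulDl fps1_neq0.

Definition fps_z := FPS (fun n => (n == 1%N)%:R).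

Lemma FPS_sz (f : series) : FPS (sz f) = fps_z * FPS f.
Proof.
congr FPS; apply: funext => -[|n]; rewrite /smul big_ord_recl /= mul0r add0r.
  by rewrite big_ord0.
rewrite big_ord_recl /= mul1r subn1 big1 ?addr0 // => i _.
by rewrite mul0r.
Qed.

Lemma fps_mul1Dl_eq0 {a : series} {d : fps} :
  a 0%N = 0 -> (1 + FPS a) * d = 0 -> d = 0.
Proof.
case: d => d a0 /(congr1 fps_coef) /= ad0.
suff d0 n : d n = 0 by congr FPS; apply: funext => -[|n]; rewrite d0.
elim/ltn_ind: n => n IH; have := congr1 (fun s => s n) ad0.
rewrite /smul big_ord_recl /sadd /= a0 addr0 mul1r subn0 big1 ?addr0.
  by case: n {IH}.
move=> i _; rewrite IH ?mulr0 //.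
by case: n IH i => [|n] IH [i lt_in] //=; rewrite /bump /= subSS ltnS leq_subr.
Qed.

Lemma cubic_recurrence_identity {R : comPzRingType} {z a x r : R} :
  z * (1 + a) ^+ 3 = a -> (a *+ 2 - 1) * x = (1 + a) * r ->
  (1 + a) * ((z * (1 + a) ^+ 2 * x) *+ 3 - x - r) = 0.
Proof.
move=> cubic lin.
have -> : (1 + a) * ((z * (1 + a) ^+ 2 * x) *+ 3 - x - r)
          = (z * (1 + a) ^+ 3 * x) *+ 3 - (1 + a) * x - (1 + a) * r by ring.
by rewrite cubic -lin; ring.
Qed.

Section CubicRoot.

Context {a : series}.
Hypothesis a0 : a 0%N = 0.
Local Notation u := (sadd (sconst 1) a).
Hypothesis a_cubic : sz (smul u (smul u u)) = a.

(* Dividing the identity above by the unit 1 + a. *)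
Lemma cubic_recurrence_solve {x r : series} :
  smul (sadd (fun n => 2 * a n) (sconst (-1))) x = smul u r ->
  x = fun n => smul (sscale 3 (sz (smul u u))) x n - r n.
Proof.
move=> lin.
have fps_cubic : fps_z * (1 + FPS a) ^+ 3 = FPS a.
  by rewrite -[in RHS]a_cubic FPS_sz.
have fps_lin : (FPS a *+ 2 - 1) * FPS x = (1 + FPS a) * FPS r.
  have two_a : FPS a *+ 2 = FPS (fun n => 2 * a n).
    by congr FPS; apply: funext => n; rewrite mulr_natl.
  have minus1 : -1 = FPS (sconst (-1)).
    by congr FPS; apply: funext => -[|n] //=; rewrite oppr0.
  by rewrite two_a minus1; congr FPS.
have := cubic_recurrence_identity fps_cubic fps_lin.
move/(fps_mul1Dl_eq0 a0)/(congr1 fps_coef) => E.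
apply: funext => n; have := congr1 (fun s => s n) E.
have -> : fps_z * (1 + FPS a) ^+ 2 = FPS (sz (smul u u)) by rewrite FPS_sz.
rewrite smul_sscalel /sscale mulr_natl (_ : fps_coef 0 n = 0); last by case: n.
by move=> En; apply/esym/eqP; rewrite -subr_eq0 -En /= /sadd; apply/eqP; ring.
Qed.

Lemma cubic_root_posint : posint_normalized a.
Proof.
have a_succ n : a n.+1 = smul u (smul u u) n by rewrite -[in LHS]a_cubic.
have u0 : u 0%N = 1 by rewrite /sadd /= a0 addr0.
have a1 : a 1%N = 1 by rewrite a_succ !smul_at0 u0 !mulr1.
have anat : nat_series a.
  elim/ltn_ind => -[_|n IH]; first by rewrite a0 rpred0.
  have unat p : (p <= n)%N -> u p \is a Num.nat.
    by case: p => [|p] le_pn; rewrite /sadd /= ?a0 ?addr0 ?add0r ?rpred1 // IH.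
  rewrite a_succ; apply: smul_nat_le => // p le_pn.
  by apply: smul_nat_le => q le_qp; apply: unat (leq_trans le_qp le_pn).
have unat : nat_series u by apply: sadd_nat => //; apply: sconst_nat; rewrite rpred1.
split=> // n; elim: n => // n IH _; case: n IH => [_|n IH]; first by rewrite a1 ltr01.
rewrite a_succ; apply: (lt_le_trans _ (smul_ge_coef _ u0 unat (smul_nat unat unat))).
apply: (lt_le_trans _ (smul_ge_coef _ u0 unat unat)).
by rewrite /sadd /= add0r IH.
Qed.

End CubicRoot.

(* Since c 0 = 0, the coefficient x n only depends on the x m with m < n. *)
Lemma posint_normalized_fixpoint {c F x : series} :
  x = (fun n => smul c x n + F n) -> c 0%N = 0 -> nat_series c ->
  posint_normalized F -> posint_normalized x.
Proof.
move=> x_eq c0 cnat [F0 Fnat Fpos F1].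
have x_at n : x n = smul c x n + F n by rewrite {1}x_eq.
have x0 : x 0%N = 0 by rewrite x_at smul_at0 c0 mul0r F0 addr0.
have xnat : nat_series x.
  by elim/ltn_ind => n IH; rewrite x_at rpredD ?Fnat ?smul_nat_lt.
split=> // [n n_gt0|].
  by rewrite x_at ltr_wpDl ?natr_ge0 ?Fpos ?smul_nat.
by rewrite x_at smul_at1 c0 x0 F1 mul0r mulr0 !add0r.
Qed.

Definition bracket_sum (B : nat -> series) (k : nat) : series := fun n =>
  \sum_(i < k.+1) (smul (B i) (sdelta (sdelta (B (k - i)%N))) n
                   - smul (sdelta (B i)) (sdelta (B (k - i)%N)) n).

Definition pair_sum (B : nat -> series) (k : nat) : series := fun n =>
  \sum_(i < k.+1) \sum_(j < k.+1 | (i + j == k.+1)%N) sz (smul (B i) (B j)) n.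

Definition triple_sum (B : nat -> series) (k : nat) : series := fun n =>
  \sum_(j1 < k.+1) \sum_(j2 < k.+1) \sum_(j3 < k.+1 | (j1 + j2 + j3 == k.+1)%N)
    sz (smul (smul (B j1) (B j2)) (B j3)) n.

Definition signed_rhs (B : nat -> series) (k : nat) : series := fun n =>
  sdelta (sdelta (B k)) n + bracket_sum B k n + 3 * pair_sum B k n
  + triple_sum B k n.

Definition signed (B : nat -> series) (i : nat) : series := sscale ((-1) ^+ i) (B i).

Lemma signedK : involutive signed.
Proof.
by move=> B; apply: funext => i; apply: funext => n; rewrite /signed /sscale signrMK.
Qed.

Lemma bracket_sum_signed (B : nat -> series) (k n : nat) :
  bracket_sum (signed B) k n = (-1) ^+ k * bracket_sum B k n.
Proof.
rewrite mulr_sumr; apply: eq_bigr => i _.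
have sign : (-1) ^+ i * (-1) ^+ (k - i) = (-1) ^+ k :> algC.
  by rewrite -exprD subnKC // -ltnS.
rewrite /signed !sdelta_sscale !smul_sscalel !smul_sscaler /sscale -sign; ring.
Qed.

Lemma pair_sum_signed (B : nat -> series) (k n : nat) :
  pair_sum (signed B) k n = - (-1) ^+ k * pair_sum B k n.
Proof.
rewrite mulr_sumr; apply: eq_bigr => i _; rewrite mulr_sumr.
apply: eq_bigr => j /eqP ij.
have sign : (-1) ^+ i * (-1) ^+ j = - (-1) ^+ k :> algC.
  by rewrite -exprD ij exprS mulN1r.
by rewrite /signed !(smul_sscalel, smul_sscaler, sz_sscale) /sscale -sign; ring.
Qed.

Lemma triple_sum_signed (B : nat -> series) (k n : nat) :
  triple_sum (signed B) k n = - (-1) ^+ k * triple_sum B k n.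
Proof.
rewrite mulr_sumr; apply: eq_bigr => i _; rewrite mulr_sumr.
apply: eq_bigr => j _; rewrite mulr_sumr; apply: eq_bigr => l /eqP ijl.
have sign : (-1) ^+ i * (-1) ^+ j * (-1) ^+ l = - (-1) ^+ k :> algC.
  by rewrite -!exprD ijl exprS mulN1r.
by rewrite /signed !(smul_sscalel, smul_sscaler, sz_sscale) /sscale -sign; ring.
Qed.

Lemma rec_rhs_signed (B : nat -> series) (k n : nat) :
  (-1) ^+ k * rec_rhs (signed B) k n = signed_rhs B k n.
Proof.
have -> : rec_rhs (signed B) k n = sdelta (sdelta (signed B k)) n
    + bracket_sum (signed B) k n - 3 * pair_sum (signed B) k n
    - triple_sum (signed B) k n by [].
have sign2 : (-1) ^+ k * (-1) ^+ k = 1 :> algC by rewrite -expr2 sqrr_sign.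
transitivity ((-1) ^+ k * (-1) ^+ k * signed_rhs B k n); last by rewrite sign2 mul1r.
rewrite bracket_sum_signed pair_sum_signed triple_sum_signed.
by rewrite /signed !sdelta_sscale /sscale /signed_rhs; ring.
Qed.

Lemma sum_ord_rev {V : nmodType} (k : nat) (G : nat -> nat -> V) :
  \sum_(i < k.+1) G i (k - i)%N = \sum_(i < k.+1) G (k - i)%N i.
Proof.
rewrite (reindex_inj rev_ord_inj) /=; apply: eq_bigr => i _.
by rewrite subSS subKn // -ltnS.
Qed.

Lemma bracket_sum_sym (B : nat -> series) (k n : nat) :
  bracket_sum B k n *+ 2 = \sum_(i < k.+1) \sum_(p < n.+1)
    B i p * B (k - i)%N (n - p)%N * ((n - p)%:R - p%:R) ^+ 2.
Proof.
pose F i j p q := B i p * (q%:R * (q%:R * B j q)) - p%:R * B i p * (q%:R * B j q).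
have bracketE : bracket_sum B k n
    = \sum_(i < k.+1) \sum_(p < n.+1) F i (k - i)%N p (n - p)%N.
  apply: eq_bigr => i _; rewrite /smul -sumrB.
  by apply: eq_bigr => p _; rewrite /F /sdelta mulrA.
rewrite mulr2n {2}bracketE.
rewrite (sum_ord_rev k (fun i j => \sum_(p < n.+1) F i j p (n - p)%N)) /=.
under [X in _ + X]eq_bigr => i _ do rewrite (sum_ord_rev n (F (k - i)%N i)).
rewrite bracketE -big_split /=; apply: eq_bigr => i _; rewrite -big_split /=.
by apply: eq_bigr => p _; rewrite /F; ring.
Qed.

Section SignedSums.

Context {B : nat -> series} {k : nat}.
Hypothesis Bnat : forall i, (i <= k)%N -> nat_series (B i).

Lemma bracket_sum_nat : nat_series (bracket_sum B k).
Proof.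
move=> n.
have Bint i p : (i <= k)%N -> B i p \is a Num.int.
  by move=> le_ik; apply/intr_nat/Bnat.
have bracket_int : bracket_sum B k n \is a Num.int.
  apply: rpred_sum => i _; rewrite rpredB //; apply: rpred_sum => p _;
    by rewrite /sdelta !rpredM ?natr_int ?Bint ?leq_subr ?leq_ord.
rewrite natrEint bracket_int -(pmulrn_lge0 _ (isT : (0 < 2)%N)) bracket_sum_sym.
apply: sumr_ge0 => i _; apply: sumr_ge0 => p _.
rewrite mulr_ge0 // -?realEsqr ?rpredB ?realn //.
by rewrite mulr_ge0 // natr_ge0 //; apply: Bnat; rewrite ?leq_subr ?leq_ord.
Qed.

Lemma pair_sum_nat : nat_series (pair_sum B k).
Proof.
move=> n; apply: rpred_sum => i _; apply: rpred_sum => j _.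
by apply: sz_nat; apply: smul_nat; apply: Bnat; rewrite -ltnS.
Qed.

Lemma triple_sum_nat : nat_series (triple_sum B k).
Proof.
move=> n; apply: rpred_sum => i _; apply: rpred_sum => j _; apply: rpred_sum => l _.
by apply/sz_nat/smul_nat; [apply: smul_nat|]; apply: Bnat; rewrite -ltnS.
Qed.

Hypothesis B0 : forall i, (i <= k)%N -> B i 0%N = 0.

Lemma bracket_sum_at01 (n : nat) : (n <= 1)%N -> bracket_sum B k n = 0.
Proof.
move=> le_n1; apply: big1 => i _.
have Bi0 : B i 0%N = 0 by apply: B0; rewrite -ltnS.
case: n le_n1 => [|[|//]] _; rewrite ?smul_at0 ?smul_at1 !sdelta_at0 ?Bi0;
  by rewrite !(mul0r, mulr0, addr0, subrr).
Qed.

Lemma pair_sum_at01 (n : nat) : (n <= 1)%N -> pair_sum B k n = 0.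
Proof.
move=> le_n1; apply: big1 => i _; apply: big1 => j _.
by case: n le_n1 => [|[|//]] _ //=; rewrite smul_at0 B0 ?mul0r // -ltnS.
Qed.

Lemma triple_sum_at01 (n : nat) : (n <= 1)%N -> triple_sum B k n = 0.
Proof.
move=> le_n1; apply: big1 => i _; apply: big1 => j _; apply: big1 => l _.
by case: n le_n1 => [|[|//]] _ //=; rewrite smul_at0 (B0 l) ?mulr0 // -ltnS.
Qed.

End SignedSums.

Lemma signed_rhs_posint (B : nat -> series) (k : nat) :
  (forall i, (i <= k)%N -> posint_normalized (B i)) ->
  posint_normalized (signed_rhs B k).
Proof.
move=> Bpos.
have Bnat i : (i <= k)%N -> nat_series (B i) by case/Bpos.
have B0 i : (i <= k)%N -> B i 0%N = 0 by case/Bpos.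
have [_ Bknat Bkpos Bk1] := Bpos k (leqnn k).
have at01 n : (n <= 1)%N -> signed_rhs B k n = sdelta (sdelta (B k)) n.
  move=> le_n1; rewrite /signed_rhs (bracket_sum_at01 B0) ?(pair_sum_at01 B0) //.
  by rewrite (triple_sum_at01 B0) // mulr0 !addr0.
have Bk_nat : nat_series (sdelta (sdelta (B k))) by apply/sdelta_nat/sdelta_nat.
have rest_nat n :
    bracket_sum B k n + (3 * pair_sum B k n + triple_sum B k n) \is a Num.nat.
  rewrite !rpredD ?rpredM ?natr_nat //;
    [exact: bracket_sum_nat | exact: pair_sum_nat | exact: triple_sum_nat].
split=> [|n|n n_gt0|]; first by rewrite at01 // sdelta_at0.
- by rewrite /signed_rhs -!addrA rpredD.
- rewrite /signed_rhs -!addrA ltr_pwDl ?natr_ge0 //.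
  by rewrite /sdelta !mulr_gt0 ?ltr0n ?Bkpos.
- by rewrite at01 // /sdelta Bk1 !mulr1.
Qed.

Section Recurrence.

Context {A : nat -> series}.
Hypothesis A00 : A 0%N 0%N = 0.
Local Notation u := (sadd (sconst 1) (A 0%N)).
Hypothesis A0_cubic : sz (smul u (smul u u)) = A 0%N.
Hypothesis A_rec : forall k,
  smul (sadd (fun n => 2 * A 0%N n) (sconst (-1))) (A k.+1) = smul u (rec_rhs A k).

Lemma signed_succ_eq (k : nat) :
  signed A k.+1 = fun n =>
    smul (sscale 3 (sz (smul u u))) (signed A k.+1) n + signed_rhs (signed A) k n.
Proof.
apply: funext => n; rewrite -rec_rhs_signed signedK /signed smul_sscaler /sscale.
have /(congr1 (fun f => f n)) /= -> := cubic_recurrence_solve A00 A0_cubic (A_rec k).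
by rewrite exprS; ring.
Qed.

Lemma signed_posint (k : nat) : posint_normalized (signed A k).
Proof.
elim/ltn_ind: k => -[_|k IH].
  have -> : signed A 0 = A 0%N.
    by apply: funext => n; rewrite /signed /sscale mul1r.
  exact: cubic_root_posint.
have [_ A0nat _ _] := cubic_root_posint A00 A0_cubic.
have unat : nat_series u by apply/sadd_nat/A0nat/sconst_nat/rpred1.
apply: (posint_normalized_fixpoint (signed_succ_eq k)).
- by rewrite /sscale mulr0.
- by apply/sscale_nat/sz_nat/smul_nat; rewrite ?natr_nat.
- by apply: signed_rhs_posint => i le_ik; apply: IH.
Qed.

End Recurrence.

Theorem proposition3 (A : nat -> series) :
  (* A_0(0) = 0 and z (1 + A_0)^3 = A_0 *)
  A 0%N 0%N = 0 ->
  sz (smul (sadd (sconst 1) (A 0%N))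
           (smul (sadd (sconst 1) (A 0%N)) (sadd (sconst 1) (A 0%N)))) = A 0%N ->
  (* recurrence, multiplied through by the unit 2 A_0 - 1 *)
  (forall k : nat,
     smul (sadd (fun n => 2 * A 0%N n) (sconst (-1))) (A k.+1)
     = smul (sadd (sconst 1) (A 0%N)) (rec_rhs A k)) ->
  forall k : nat,
    A k 0%N = 0 /\
    (forall n : nat, (1 <= n)%N ->
       exists m : nat, (-1) ^+ k * A k n = m.+1%:R) /\
    (-1) ^+ k * A k 1%N = 1.
Proof.
move=> A00 A0_cubic A_rec k.
have [Ak0 Aknat Akpos Ak1] := signed_posint A00 A0_cubic A_rec k.
split; [|split] => //.
- by move/eqP: Ak0; rewrite /signed /sscale mulf_eq0 signr_eq0 => /eqP.
- move=> n n_gt0; have /natrP[[|m] Akn] := Aknat n; last by exists m.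
  by have := Akpos n n_gt0; rewrite Akn ltxx.
Qed.
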